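(* For all closed terms $t_0,t_1$ of $\lambda_S$, if $t_0 \approx_{\emptyset} t_1$ then $t_0 \equiv t_1$.
   Context: Terms of $\lambda_S$: $t ::= x \mid \lambda x.t \mid t\,t \mid \mathcal{S}k.t \mid \langle t\rangle$ (shift $\mathcal{S}k.t$ binds $k$, reset $\langle t\rangle$), taken up to $\alpha$-conversion; $\mathrm{fv}(t)$ is the set of free variables and $t$ is closed if $\mathrm{fv}(t)=\emptyset$. Values: $v ::= \lambda x.t$. Pure contexts $E ::= \Box \mid v\,E \mid E\,t$; evaluation contexts $F ::= \Box \mid v\,F \mid F\,t \mid \langle F\rangle$; contexts $C ::= \Box \mid \lambda x.C \mid t\,C \mid C\,t \mid \mathcal{S}k.C \mid \langle C\rangle$ (filling may capture variables). Reduction: $F[(\lambda x.t)\,v] \to F[t\{v/x\}]$; $F[\langle E[\mathcal{S}k.t]\rangle] \to F[\langle t\{\lambda x.\langle E[x]\rangle/k\}\rangle]$ ($x\notin\mathrm{fv}(E)$); $F[\langle v\rangle]\to F[v]$. $\to^*$ is the reflexive-transitive closure; $t\Downarrow t'$ means $t\to^* t'$ and $t'$ is irreducible. A term is stuck if it is not a value and is irreducible; a normal form is a value or a stuck term. Closures: for a relation $R$ on closed terms, $\widetilde R$ is the smallest relation on terms containing $R$, all pairs $(x,x)$ for variables $x$, and closed under the constructors ($t_0\widetilde R t_1$ implies $\lambda x.t_0\widetilde R\lambda x.t_1$, $\mathcal S k.t_0\widetilde R\mathcal Sk.t_1$, $\langle t_0\rangle\widetilde R\langle t_1\rangle$; $t_0\widetilde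 R t_1$ and $t_0'\widetilde R t_1'$ imply $t_0t_0'\widetilde R t_1t_1'$), restricted to closed terms. $\widehat R$ is the smallest relation on closed evaluation contexts with $\Box\widehat R\Box$; $v_0F_0\widehat R v_1F_1$ if $F_0\widehat R F_1$, $v_0\widetilde R v_1$; $F_0t_0\widehat R F_1t_1$ if $F_0\widehat RF_1$, $t_0\widetilde R t_1$; $\langle F_0\rangle\widehat R\langle F_1\rangle$ if $F_0\widehat RF_1$ (in particular it relates pure contexts). Environmental bisimilarity: an environment $\mathcal E$ is a relation on closed normal forms relating values only to values and stuck terms only to stuck terms. An environmental relation $\mathcal X$ is a set of environments and of triples $(\mathcal E,t_0,t_1)$ with $t_0,t_1$ closed; write $t_0\,\mathcal X_{\mathcal E}\,t_1$. $\mathcal X$ is an environmental bisimulation if (1) whenever $t_0\,\mathcal X_{\mathcal E}\,t_1$: (a) if $t_0\to t_0'$ then $t_1\to^* t_1'$ with $t_0'\,\mathcal X_{\mathcal E}\,t_1'$; (b) if $t_0$ is a value $v_0$ then $t_1\to^* v_1$ for a value $v_1$ and $\mathcal E\cup\{(v_0,v_1)\}\in\mathcal X$; (c) if $t_0$ is stuck then $t_1\to^* t_1'$ with $t_1'$ stuck and $\mathcal E\cup\{(t_0,t_1')\}\in\mathcal X$; (d) the symmetric conditions with $t_0,t_1$ swapped; (2) whenever $\mathcal E\in\mathcal X$: (a) if $(\lambda x.t_0)\,\mathcal E\,(\lambda x.t_1)$ and $v_0\widetilde{\mathcal E}v_1$ then $t_0\{v_0/x\}\,\mathcal X_{\mathcal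 E}\,t_1\{v_1/x\}$; (b) if $E_0[\mathcal Sk.t_0]\,\mathcal E\,E_1[\mathcal Sk.t_1]$ and $E_0'\widehat{\mathcal E}E_1'$ (pure contexts), then $\langle t_0\{\lambda x.\langle E_0'[E_0[x]]\rangle/k\}\rangle\,\mathcal X_{\mathcal E}\,\langle t_1\{\lambda x.\langle E_1'[E_1[x]]\rangle/k\}\rangle$ for fresh $x$. $\approx$ is the largest environmental bisimulation; $t_0\approx_{\mathcal E}t_1$ means $(\mathcal E,t_0,t_1)\in\approx$. Contextual equivalence: $t_0\equiv t_1$ iff for every context $C$ with $C[t_0],C[t_1]$ closed, $C[t_0]\Downarrow$ a value iff $C[t_1]\Downarrow$ a value, and $C[t_0]\Downarrow$ a stuck term iff $C[t_1]\Downarrow$ a stuck term. *)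

(* Terms of lambda_S with de Bruijn indices (terms up to alpha). *)
From Stdlib Require Import Arith List.

Inductive term : Type :=
| Var (n : nat)
| Lam (t : term)
| App (t u : term)
| Shift (t : term)        (* S k. t, binds index 0 (= k) in t *)
| Reset (t : term).

Fixpoint closed_at (k : nat) (t : term) : Prop :=
  match t with
  | Var n => n < k
  | Lam t => closed_at (S k) t
  | App t u => closed_at k t /\ closed_at k u
  | Shift t => closed_at (S k) t
  | Reset t => closed_at k t
  end.

Definition closed (t : term) : Prop := closed_at 0 t.

Definition is_val (t : term) : Prop := exists b, t = Lam b.

Fixpoint lift (c : nat) (t : term) : term :=
  match t with
  | Var n => if n <? c then Var n else Var (S n)
  | Lam t => Lam (lift (S c) t)
  | App t u => App (lift c t) (lift c u)
  | Shift t => Shift (lift (S c) t)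
  | Reset t => Reset (lift c t)
  end.

Fixpoint subst (k : nat) (s : term) (t : term) : term :=
  match t with
  | Var n => if n =? k then s else if k <? n then Var (pred n) else Var n
  | Lam t => Lam (subst (S k) (lift 0 s) t)
  | App t u => App (subst k s t) (subst k s u)
  | Shift t => Shift (subst (S k) (lift 0 s) t)
  | Reset t => Reset (subst k s t)
  end.

Definition subst0 (v t : term) : term := subst 0 v t.

(* Evaluation contexts F ::= [] | v F | F t | <F>  (pure when no reset) *)
Inductive ectx : Type :=
| Hole
| ArgCtx (v : term) (F : ectx)
| FunCtx (F : ectx) (t : term)
| ResetCtx (F : ectx).

Fixpoint plug (F : ectx) (t : term) : term :=
  match F with
  | Hole => t
  | ArgCtx v F => App v (plug F t)
  | FunCtx F u => App (plug F t) u
  | ResetCtx F => Reset (plug F t)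
  end.

Fixpoint lift_ectx (c : nat) (F : ectx) : ectx :=
  match F with
  | Hole => Hole
  | ArgCtx v F => ArgCtx (lift c v) (lift_ectx c F)
  | FunCtx F u => FunCtx (lift_ectx c F) (lift c u)
  | ResetCtx F => ResetCtx (lift_ectx c F)
  end.

Fixpoint eval_ctx (F : ectx) : Prop :=
  match F with
  | Hole => True
  | ArgCtx v F => is_val v /\ eval_ctx F
  | FunCtx F _ => eval_ctx F
  | ResetCtx F => eval_ctx F
  end.

Fixpoint pure_ctx (F : ectx) : Prop :=
  match F with
  | Hole => True
  | ArgCtx v F => is_val v /\ pure_ctx F
  | FunCtx F _ => pure_ctx F
  | ResetCtx _ => False
  end.

Fixpoint closed_ectx (F : ectx) : Prop :=
  match F with
  | Hole => True
  | ArgCtx v F => closed v /\ closed_ectx F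
  | FunCtx F u => closed_ectx F /\ closed u
  | ResetCtx F => closed_ectx F
  end.

(* The continuation \x.<E[x]> captured by shift *)
Definition capture (E : ectx) : term := Lam (Reset (plug (lift_ectx 0 E) (Var 0))).

Inductive step : term -> term -> Prop :=
| step_beta : forall F t v, eval_ctx F -> is_val v ->
    step (plug F (App (Lam t) v)) (plug F (subst0 v t))
| step_shift : forall F E t, eval_ctx F -> pure_ctx E ->
    step (plug F (Reset (plug E (Shift t))))
         (plug F (Reset (subst0 (capture E) t)))
| step_reset : forall F v, eval_ctx F -> is_val v ->
    step (plug F (Reset v)) (plug F v).

Inductive star : term -> term -> Prop :=
| star_refl : forall t, star t t
| star_step : forall t t' t'', step t t' -> star t' t'' -> star t t''.

Definition irreducible (t : term) : Prop := forall t', ~ step t t'.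
Definition stuck (t : term) : Prop := ~ is_val t /\ irreducible t.
Definition normal_form (t : term) : Prop := is_val t \/ stuck t.
Definition evals_to (t t' : term) : Prop := star t t' /\ irreducible t'.

(* General (one-hole) contexts; filling may capture variables *)
Inductive ctx : Type :=
| CHole
| CLam (C : ctx)
| CAppL (C : ctx) (t : term)
| CAppR (t : term) (C : ctx)
| CShift (C : ctx)
| CReset (C : ctx).

Fixpoint cfill (C : ctx) (t : term) : term :=
  match C with
  | CHole => t
  | CLam C => Lam (cfill C t)
  | CAppL C u => App (cfill C t) u
  | CAppR u C => App u (cfill C t)
  | CShift C => Shift (cfill C t)
  | CReset C => Reset (cfill C t)
  end.

Definition rel := term -> term -> Prop.

Inductive tclos (R : rel) : rel :=
| tc_base : forall t0 t1, R t0 t1 -> tclos R t0 t1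
| tc_var : forall n, tclos R (Var n) (Var n)
| tc_lam : forall t0 t1, tclos R t0 t1 -> tclos R (Lam t0) (Lam t1)
| tc_shift : forall t0 t1, tclos R t0 t1 -> tclos R (Shift t0) (Shift t1)
| tc_reset : forall t0 t1, tclos R t0 t1 -> tclos R (Reset t0) (Reset t1)
| tc_app : forall t0 t1 u0 u1, tclos R t0 t1 -> tclos R u0 u1 ->
    tclos R (App t0 u0) (App t1 u1).

Definition tilde (R : rel) : rel :=
  fun t0 t1 => tclos R t0 t1 /\ closed t0 /\ closed t1.

Inductive hat (R : rel) : ectx -> ectx -> Prop :=
| hat_hole : hat R Hole Hole
| hat_arg : forall v0 v1 F0 F1, hat R F0 F1 -> is_val v0 -> is_val v1 ->
    tilde R v0 v1 -> hat R (ArgCtx v0 F0) (ArgCtx v1 F1)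
| hat_fun : forall F0 F1 t0 t1, hat R F0 F1 -> tilde R t0 t1 ->
    hat R (FunCtx F0 t0) (FunCtx F1 t1)
| hat_reset : forall F0 F1, hat R F0 F1 -> hat R (ResetCtx F0) (ResetCtx F1).

Definition environment (E : rel) : Prop :=
  forall a b, E a b -> closed a /\ closed b /\
    ((is_val a /\ is_val b) \/ (stuck a /\ stuck b)).

Definition rel_add (E : rel) (a b : term) : rel :=
  fun x y => E x y \/ (x = a /\ y = b).

Definition empty_env : rel := fun _ _ => False.

Record envrel : Type := EnvRel {
  X_env : rel -> Prop;
  X_trip : rel -> term -> term -> Prop
}.

Definition is_envrel (X : envrel) : Prop :=
  (forall E, X_env X E -> environment E) /\
  (forall E t0 t1, X_trip X E t0 t1 -> environment E /\ closed t0 /\ closed t1).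

Definition env_bisim (X : envrel) : Prop :=
  (forall E t0 t1, X_trip X E t0 t1 ->
     (forall t0', step t0 t0' -> exists t1', star t1 t1' /\ X_trip X E t0' t1') /\
     (is_val t0 -> exists v1, star t1 v1 /\ is_val v1 /\ X_env X (rel_add E t0 v1)) /\
     (stuck t0 -> exists t1', star t1 t1' /\ stuck t1' /\ X_env X (rel_add E t0 t1')) /\
     (forall t1', step t1 t1' -> exists t0', star t0 t0' /\ X_trip X E t0' t1') /\
     (is_val t1 -> exists v0, star t0 v0 /\ is_val v0 /\ X_env X (rel_add E v0 t1)) /\
     (stuck t1 -> exists t0', star t0 t0' /\ stuck t0' /\ X_env X (rel_add E t0' t1)))
  /\
  (forall E, X_env X E ->
     (forall t0 t1 v0 v1, E (Lam t0) (Lam t1) -> is_val v0 -> is_val v1 ->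
        tilde E v0 v1 -> X_trip X E (subst0 v0 t0) (subst0 v1 t1)) /\
     (forall E0 E1 t0 t1 E0' E1', pure_ctx E0 -> pure_ctx E1 ->
        E (plug E0 (Shift t0)) (plug E1 (Shift t1)) ->
        pure_ctx E0' -> pure_ctx E1' -> hat E E0' E1' ->
        X_trip X E
          (Reset (subst0 (Lam (Reset (plug (lift_ectx 0 E0')
                                         (plug (lift_ectx 0 E0) (Var 0))))) t0))
          (Reset (subst0 (Lam (Reset (plug (lift_ectx 0 E1')
                                         (plug (lift_ectx 0 E1) (Var 0))))) t1)))).

(* Environmental bisimilarity: the largest environmental bisimulation,
   i.e. the union of all of them. *)
Definition bisimilar (E : rel) (t0 t1 : term) : Prop :=
  exists X, is_envrel X /\ env_bisim X /\ X_trip X E t0 t1.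

Definition ctx_equiv (t0 t1 : term) : Prop :=
  forall C, closed (cfill C t0) -> closed (cfill C t1) ->
    ((exists v, evals_to (cfill C t0) v /\ is_val v) <->
     (exists v, evals_to (cfill C t1) v /\ is_val v)) /\
    ((exists s, evals_to (cfill C t0) s /\ stuck s) <->
     (exists s, evals_to (cfill C t1) s /\ stuck s)).

(* The two directions are symmetric: the converse of an environmental
   bisimulation is again one.

   First, X is sound for evaluation contexts.  Call a pair related "up to
   context" if it lies in the compatible closure of an environment of X, or
   if it is a triple of X placed into evaluation contexts related by such a
   closure.  Every reduction step of the left term is matched by reductions
   of the right term into another such pair: inside the closure the steps
   coincide, except for a beta-redex whose function is related by the
   environment and a shift-redex whose stuck body is, and these clauses (2a)
   and (2b) of the bisimulation turn back into triples; a triple either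
   steps by clause (1) or, once normal, extends the environment.  Hence both
   terms reach normal forms of the same kind.

   Second, soundness for evaluation contexts extends to arbitrary contexts:
   a term in which some occurrences of t0 were replaced by t1 reduces in
   lockstep with the original until a replaced occurrence reaches evaluation
   position; there, undoing that single replacement decreases the number of
   replacements, and the two sides differ by an evaluation context only. *)

From Stdlib Require Import Arith Lia.

(** * Closed terms and evaluation contexts *)

Lemma closed_at_weaken t k k' : closed_at k t -> k <= k' -> closed_at k' t.
Proof.
  induction t in k, k' |- *; simpl; intros Ht Hle.
  - lia.
  - apply (IHt (S k)); [exact Ht | lia].
  - destruct Ht; split; eauto.
  - apply (IHt (S k)); [exact Ht | lia].
  - eauto.
Qed.

Lemma closed_at_of_closed t k : closed t -> closed_at k t.
Proof. intros Ht; apply (closed_at_weaken t 0); [exact Ht | lia]. Qed.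

Lemma lift_closed_at t c : closed_at c t -> lift c t = t.
Proof.
  induction t in c |- *; simpl; intros Ht.
  - destruct (Nat.ltb_spec n c); [reflexivity | lia].
  - now rewrite IHt.
  - destruct Ht; now rewrite IHt1, IHt2.
  - now rewrite IHt.
  - now rewrite IHt.
Qed.

Lemma subst_closed_at t k s : closed_at k t -> subst k s t = t.
Proof.
  induction t in k, s |- *; simpl; intros Ht.
  - destruct (Nat.eqb_spec n k); [lia |].
    destruct (Nat.ltb_spec k n); [lia | reflexivity].
  - now rewrite IHt.
  - destruct Ht; now rewrite IHt1, IHt2.
  - now rewrite IHt.
  - now rewrite IHt.
Qed.

Lemma closed_at_lift t k c : closed_at k t -> closed_at (S k) (lift c t).
Proof.
  induction t in k, c |- *; simpl; intros Ht.
  - destruct (n <? c); simpl; lia.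
  - auto.
  - destruct Ht; split; auto.
  - auto.
  - auto.
Qed.

Lemma closed_at_subst t k s :
  closed_at (S k) t -> closed_at k s -> closed_at k (subst k s t).
Proof.
  induction t in k, s |- *; simpl; intros Ht Hs.
  - destruct (Nat.eqb_spec n k); [exact Hs |].
    destruct (Nat.ltb_spec k n); simpl; lia.
  - apply IHt; auto using closed_at_lift.
  - destruct Ht; split; auto.
  - apply IHt; auto using closed_at_lift.
  - auto.
Qed.

Fixpoint closed_at_ectx (k : nat) (F : ectx) : Prop :=
  match F with
  | Hole => True
  | ArgCtx v F => closed_at k v /\ closed_at_ectx k F
  | FunCtx F u => closed_at_ectx k F /\ closed_at k u
  | ResetCtx F => closed_at_ectx k F
  end.

Lemma closed_at_plug F k x :
  closed_at k (plug F x) <-> closed_at_ectx k F /\ closed_at k x.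
Proof. induction F; simpl; try rewrite IHF; tauto. Qed.

Lemma closed_at_ectx_lift F k c :
  closed_at_ectx k F -> closed_at_ectx (S k) (lift_ectx c F).
Proof. induction F; simpl; intuition auto using closed_at_lift. Qed.

Lemma closed_capture E : closed_at_ectx 0 E -> closed (capture E).
Proof.
  intros HE; unfold closed, capture; simpl.
  apply closed_at_plug; split; [apply closed_at_ectx_lift; exact HE | simpl; lia].
Qed.

Fixpoint ectx_comp (F G : ectx) : ectx :=
  match F with
  | Hole => G
  | ArgCtx v F => ArgCtx v (ectx_comp F G)
  | FunCtx F u => FunCtx (ectx_comp F G) u
  | ResetCtx F => ResetCtx (ectx_comp F G)
  end.

Lemma plug_comp F G x : plug (ectx_comp F G) x = plug F (plug G x).
Proof. induction F; simpl; congruence. Qed.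

Lemma eval_ctx_comp F G : eval_ctx F -> eval_ctx G -> eval_ctx (ectx_comp F G).
Proof. induction F; simpl; tauto. Qed.

Lemma pure_ctx_comp F G : pure_ctx F -> pure_ctx G -> pure_ctx (ectx_comp F G).
Proof. induction F; simpl; tauto. Qed.

Lemma pure_ctx_comp_inv F G : pure_ctx (ectx_comp F G) -> pure_ctx F /\ pure_ctx G.
Proof. induction F; simpl; tauto. Qed.

Lemma pure_ctx_eval_ctx E : pure_ctx E -> eval_ctx E.
Proof. induction E; simpl; tauto. Qed.

Lemma closed_at_ectx_comp F G k :
  closed_at_ectx k (ectx_comp F G) <-> closed_at_ectx k F /\ closed_at_ectx k G.
Proof. induction F; simpl; try rewrite IHF; tauto. Qed.

Lemma lift_ectx_comp F G c :
  lift_ectx c (ectx_comp F G) = ectx_comp (lift_ectx c F) (lift_ectx c G).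
Proof. induction F; simpl; congruence. Qed.

Lemma capture_comp F G :
  capture (ectx_comp F G) = Lam (Reset (plug (lift_ectx 0 F) (plug (lift_ectx 0 G) (Var 0)))).
Proof. unfold capture; now rewrite lift_ectx_comp, plug_comp. Qed.

(** * Reduction: determinism and progress *)

Inductive head_step : term -> term -> Prop :=
| head_beta t v : is_val v -> head_step (App (Lam t) v) (subst0 v t)
| head_shift E t : pure_ctx E ->
    head_step (Reset (plug E (Shift t))) (Reset (subst0 (capture E) t))
| head_reset v : is_val v -> head_step (Reset v) v.

Lemma step_iff a a' :
  step a a' <-> exists F r r', eval_ctx F /\ head_step r r' /\ a = plug F r /\ a' = plug F r'.
Proof.
  split.
  - intros []; do 3 eexists; repeat split; eauto; constructor; auto.
  - intros (F & r & r' & HF & [] & -> & ->); constructor; auto.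
Qed.

Lemma head_step_step r r' : head_step r r' -> step r r'.
Proof. intros Hr; apply step_iff; exists Hole, r, r'; simpl; auto. Qed.

Lemma step_plug F a a' : eval_ctx F -> step a a' -> step (plug F a) (plug F a').
Proof.
  intros HF (G & r & r' & HG & Hr & -> & ->)%step_iff.
  apply step_iff; exists (ectx_comp F G), r, r'; rewrite !plug_comp.
  auto using eval_ctx_comp.
Qed.

Lemma closed_step a a' : step a a' -> closed a -> closed a'.
Proof.
  intros [F t v HF Hv | F E t HF HE | F v HF Hv]; unfold closed;
    rewrite !closed_at_plug; simpl; intros [HFc Hr]; split; auto.
  - destruct Hr; apply closed_at_subst; auto.
  - apply closed_at_plug in Hr as [HEc Ht]; simpl in Ht.
    apply closed_at_subst; [exact Ht | apply closed_capture, HEc].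
Qed.

Lemma star_one a b : step a b -> star a b.
Proof. intros H; econstructor; [exact H | constructor]. Qed.

Lemma star_trans a b c : star a b -> star b c -> star a c.
Proof. induction 1; eauto using star. Qed.

Lemma star_plug F a a' : eval_ctx F -> star a a' -> star (plug F a) (plug F a').
Proof. intros HF; induction 1; eauto using star, step_plug. Qed.

Lemma pure_plug_shift_not_val E s : pure_ctx E -> ~ is_val (plug E (Shift s)).
Proof. destruct E; simpl; intros HE [b Hb]; congruence || tauto. Qed.

Lemma pure_plug_shift_not_reset E s u : pure_ctx E -> plug E (Shift s) <> Reset u.
Proof. destruct E; simpl; congruence || tauto. Qed.

Lemma plug_head_step_not_val F r r' : head_step r r' -> ~ is_val (plug F r).
Proof. destruct F, 1; simpl; intros [b Hb]; congruence. Qed.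

Lemma plug_head_step_neq_pure_plug_shift F r r' E s :
  eval_ctx F -> head_step r r' -> pure_ctx E -> plug F r <> plug E (Shift s).
Proof.
  induction F in E |- *; simpl; intros HF Hr HE Heq.
  - destruct Hr; [| symmetry in Heq; eapply pure_plug_shift_not_reset; eauto..].
    destruct E; simpl in *; try discriminate; try tauto; injection Heq as H1 H2.
    + apply (pure_plug_shift_not_val E s); [tauto | congruence].
    + apply (pure_plug_shift_not_val E s HE); rewrite <- H1; eexists; eauto.
  - destruct E; simpl in *; try discriminate; try tauto; injection Heq as H1 H2.
    + eapply IHF; eauto; tauto.
    + apply (pure_plug_shift_not_val E s HE); rewrite <- H1; tauto.
  - destruct E; simpl in *; try discriminate; try tauto; injection Heq as H1 H2.
    + eapply plug_head_step_not_val; [eauto |]; rewrite H1; tauto.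
    + eapply IHF; eauto.
  - symmetry in Heq; eapply pure_plug_shift_not_reset; eauto.
Qed.

Lemma pure_plug_shift_inj E E' s s' : pure_ctx E -> pure_ctx E' ->
  plug E (Shift s) = plug E' (Shift s') -> E = E' /\ s = s'.
Proof.
  induction E in E' |- *; destruct E'; simpl; intros HE HE' Heq;
    try discriminate; try tauto.
  - now injection Heq.
  - injection Heq as -> Heq; destruct (IHE E'); try tauto; subst; auto.
  - injection Heq as H1 _.
    destruct (pure_plug_shift_not_val E' s' HE'); rewrite <- H1; tauto.
  - injection Heq as H1 _.
    destruct (pure_plug_shift_not_val E s HE); rewrite H1; tauto.
  - injection Heq as Heq ->; destruct (IHE E'); auto; subst; auto.
Qed.

Lemma unique_decomposition F1 F2 r1 r1' r2 r2' :
  eval_ctx F1 -> eval_ctx F2 -> head_step r1 r1' -> head_step r2 r2' ->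
  plug F1 r1 = plug F2 r2 -> F1 = F2 /\ r1 = r2.
Proof.
  induction F1 in F2 |- *; destruct F2; simpl; intros HF1 HF2 Hr1 Hr2 Heq;
    try discriminate.
  - auto.
  - destruct Hr1; try discriminate; injection Heq as -> Hv.
    destruct (plug_head_step_not_val F2 r2 r2' Hr2); rewrite <- Hv; auto.
  - destruct Hr1; try discriminate; injection Heq as Hv ->.
    destruct (plug_head_step_not_val F2 r2 r2' Hr2); rewrite <- Hv; eexists; eauto.
  - exfalso; destruct Hr1; try discriminate; injection Heq as Heq.
    + eapply plug_head_step_neq_pure_plug_shift; eauto.
    + apply (plug_head_step_not_val F2 r2 r2' Hr2); rewrite <- Heq; auto.
  - destruct Hr2; try discriminate; injection Heq as -> Hv.
    destruct (plug_head_step_not_val F1 r1 r1' Hr1); rewrite Hv; auto.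
  - injection Heq as -> Heq; destruct (IHF1 F2) as [-> ->]; auto; tauto.
  - injection Heq as Hv _.
    destruct (plug_head_step_not_val F2 r2 r2' Hr2); rewrite <- Hv; tauto.
  - destruct Hr2; try discriminate; injection Heq as Hv ->.
    destruct (plug_head_step_not_val F1 r1 r1' Hr1); rewrite Hv; eexists; eauto.
  - injection Heq as Hv _.
    destruct (plug_head_step_not_val F1 r1 r1' Hr1); rewrite Hv; tauto.
  - injection Heq as Heq ->; destruct (IHF1 F2) as [-> ->]; auto.
  - exfalso; destruct Hr2; try discriminate; injection Heq as Heq.
    + symmetry in Heq; eapply plug_head_step_neq_pure_plug_shift; eauto.
    + apply (plug_head_step_not_val F1 r1 r1' Hr1); rewrite Heq; auto.
  - injection Heq as Heq; destruct (IHF1 F2) as [-> ->]; auto.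
Qed.

Lemma head_step_det r r1 r2 : head_step r r1 -> head_step r r2 -> r1 = r2.
Proof.
  destruct 1 as [t v Hv | E t HE | v Hv];
    inversion 1 as [| E' t' HE' Heq | v' Hv']; subst; auto.
  - destruct (pure_plug_shift_inj E' E t' t) as [-> ->]; auto.
  - destruct (pure_plug_shift_not_val E t HE Hv').
  - destruct (pure_plug_shift_not_val E' t' HE' Hv).
Qed.

Lemma step_det a a1 a2 : step a a1 -> step a a2 -> a1 = a2.
Proof.
  intros (F1 & r1 & r1' & HF1 & Hr1 & -> & ->)%step_iff
         (F2 & r2 & r2' & HF2 & Hr2 & Heq & ->)%step_iff.
  destruct (unique_decomposition F1 F2 r1 r1' r2 r2') as [-> ->]; auto.
  now rewrite (head_step_det r2 r1' r2').
Qed.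

Lemma val_irreducible v : is_val v -> irreducible v.
Proof.
  intros Hv v' (F & r & r' & _ & Hr & -> & _)%step_iff.
  exact (plug_head_step_not_val F r r' Hr Hv).
Qed.

Lemma pure_plug_shift_stuck E s : pure_ctx E -> stuck (plug E (Shift s)).
Proof.
  split; [now apply pure_plug_shift_not_val |].
  intros v' (F & r & r' & HF & Hr & Heq & _)%step_iff.
  exact (plug_head_step_neq_pure_plug_shift F r r' E s HF Hr H (eq_sym Heq)).
Qed.

Lemma progress t : closed t ->
  is_val t \/ (exists t', step t t') \/ (exists E s, pure_ctx E /\ t = plug E (Shift s)).
Proof.
  induction t; unfold closed; simpl; intros Hc.
  - lia.
  - left; eexists; eauto.
  - destruct Hc as [Hc1 Hc2].
    destruct (IHt1 Hc1) as [[b ->] | [[t1' H1] | (E & s & HE & ->)]].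
    + destruct (IHt2 Hc2) as [Hv2 | [[t2' H2] | (E & s & HE & ->)]].
      * right; left; eexists; apply head_step_step; constructor; exact Hv2.
      * right; left; eexists; apply (step_plug (ArgCtx (Lam b) Hole)); [| exact H2].
        split; [eexists; eauto | exact I].
      * right; right; exists (ArgCtx (Lam b) E), s; simpl; split; auto; split; auto; eexists; eauto.
    + right; left; eexists; apply (step_plug (FunCtx Hole t2) _ _ I H1).
    + right; right; exists (FunCtx E t2), s; auto.
  - right; right; exists Hole, t; simpl; auto.
  - destruct (IHt Hc) as [Hv | [[t' H] | (E & s & HE & ->)]].
    + right; left; eexists; apply head_step_step; constructor; exact Hv.
    + right; left; eexists; apply (step_plug (ResetCtx Hole) _ _ I H).
    + right; left; eexists; apply head_step_step; constructor; exact HE.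
Qed.

Lemma progress_normal_form t : closed t -> (exists t', step t t') \/ normal_form t.
Proof.
  intros Hc; destruct (progress t Hc) as [Hv | [Hs | (E & s & HE & ->)]];
    unfold normal_form; auto using pure_plug_shift_stuck.
Qed.

Lemma stuck_pure_plug_shift t :
  closed t -> stuck t -> exists E s, pure_ctx E /\ t = plug E (Shift s).
Proof.
  intros Hc [Hv Hirr]; destruct (progress t Hc) as [? | [[t' Hs] | ?]]; auto.
  - contradiction.
  - destruct (Hirr t' Hs).
Qed.

Definition same_outcome (b t : term) : Prop :=
  exists t', star b t' /\ irreducible t' /\ (is_val t <-> is_val t').

Lemma same_outcome_star b b' t : star b b' -> same_outcome b' t -> same_outcome b t.
Proof. intros Hb (t' & Ht' & Hirr & Hval); exists t'; eauto using star_trans. Qed.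

Lemma same_outcome_normal_forms b t :
  (is_val t /\ is_val b) \/ (stuck t /\ stuck b) -> same_outcome b t.
Proof.
  intros [[Ht Hb] | [[Ht _] [Hb Hirr]]]; exists b; repeat split; try constructor;
    auto using val_irreducible; tauto.
Qed.

(** * Compatible closures *)

Definition closed_rel (R : rel) : Prop := forall p q, R p q -> closed p /\ closed q.

Ltac tclos_congr :=
  first [apply tc_var | apply tc_lam | apply tc_shift | apply tc_reset | apply tc_app].

Lemma tclos_refl R t : tclos R t t.
Proof. induction t; tclos_congr; auto. Qed.

Lemma tclos_mono (R R' : rel) t t' :
  (forall p q, R p q -> R' p q) -> tclos R t t' -> tclos R' t t'.
Proof. intros HR; induction 1; [apply tc_base; auto | tclos_congr; auto ..]. Qed.

Lemma tclos_lift R t t' c : closed_rel R -> tclos R t t' -> tclos R (lift c t) (lift c t').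
Proof.
  intros HR Ht; induction Ht in c |- *; simpl; try (tclos_congr; auto; fail).
  - destruct (HR _ _ H); rewrite !lift_closed_at by (apply closed_at_of_closed; auto).
    now apply tc_base.
  - apply tclos_refl.
Qed.

Lemma tclos_subst R t t' s s' k : closed_rel R ->
  tclos R t t' -> tclos R s s' -> tclos R (subst k s t) (subst k s' t').
Proof.
  intros HR Ht; induction Ht in k, s, s' |- *; simpl; intros Hs;
    try (tclos_congr; auto using tclos_lift; fail).
  - destruct (HR _ _ H); rewrite !subst_closed_at by (apply closed_at_of_closed; auto).
    now apply tc_base.
  - destruct (n =? k); [exact Hs |]; destruct (k <? n); apply tc_var.
Qed.

Lemma tclos_closed_at R t t' k : closed_rel R -> tclos R t t' ->
  closed_at k t <-> closed_at k t'.
Proof.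
  intros HR Ht; induction Ht in k |- *; simpl; try tauto; auto.
  - destruct (HR _ _ H); split; intros; apply closed_at_of_closed; auto.
  - rewrite IHHt1, IHHt2; tauto.
Qed.

Inductive ectx_clos (R : rel) : ectx -> ectx -> Prop :=
| ec_hole : ectx_clos R Hole Hole
| ec_arg v v' F F' : tclos R v v' -> ectx_clos R F F' ->
    ectx_clos R (ArgCtx v F) (ArgCtx v' F')
| ec_fun F F' u u' : ectx_clos R F F' -> tclos R u u' ->
    ectx_clos R (FunCtx F u) (FunCtx F' u')
| ec_reset F F' : ectx_clos R F F' -> ectx_clos R (ResetCtx F) (ResetCtx F').

Lemma ectx_clos_refl R F : ectx_clos R F F.
Proof. induction F; constructor; auto using tclos_refl. Qed.

Lemma ectx_clos_mono (R R' : rel) F F' :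
  (forall p q, R p q -> R' p q) -> ectx_clos R F F' -> ectx_clos R' F F'.
Proof. intros HR; induction 1; constructor; eauto using tclos_mono. Qed.

Lemma ectx_clos_plug R F F' x x' :
  ectx_clos R F F' -> tclos R x x' -> tclos R (plug F x) (plug F' x').
Proof. induction 1; simpl; intros; auto; tclos_congr; auto. Qed.

Lemma ectx_clos_lift R F F' c : closed_rel R ->
  ectx_clos R F F' -> ectx_clos R (lift_ectx c F) (lift_ectx c F').
Proof. intros HR; induction 1; simpl; constructor; auto using tclos_lift. Qed.

Lemma environment_closed_rel E : environment E -> closed_rel E.
Proof. intros HE p q Hpq; destruct (HE p q Hpq) as (? & ? & _); auto. Qed.

Lemma environment_val E p q : environment E -> E p q -> is_val p -> is_val q.
Proof. intros HE Hpq Hp; destruct (HE p q Hpq) as (_ & _ & [[_ ?] | [[? _] _]]); tauto. Qed.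

Lemma environment_not_val E p q : environment E -> E p q -> ~ is_val p -> stuck q.
Proof. intros HE Hpq Hp; destruct (HE p q Hpq) as (_ & _ & [[? _] | [_ ?]]); tauto. Qed.

Lemma environment_irreducible E p q : environment E -> E p q -> irreducible p.
Proof.
  intros HE Hpq; destruct (HE p q Hpq) as (_ & _ & [[? _] | [[_ ?] _]]);
    auto using val_irreducible.
Qed.

Section Environment.
Variable E : rel.
Hypothesis E_env : environment E.

Lemma tclos_val p q : tclos E p q -> is_val p -> is_val q.
Proof.
  intros Hpq Hp; inversion Hpq; subst; try (destruct Hp; discriminate).
  - eapply environment_val; eauto.
  - eexists; eauto.
Qed.

Lemma ectx_clos_eval_ctx F F' : ectx_clos E F F' -> eval_ctx F -> eval_ctx F'.
Proof. induction 1; simpl; intuition eauto using tclos_val. Qed.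

Lemma ectx_clos_pure_ctx F F' : ectx_clos E F F' -> pure_ctx F -> pure_ctx F'.
Proof. induction 1; simpl; intuition eauto using tclos_val. Qed.

Lemma ectx_clos_hat F F' : ectx_clos E F F' -> eval_ctx F ->
  closed_at_ectx 0 F -> closed_at_ectx 0 F' -> hat E F F'.
Proof.
  induction 1; simpl; intros; constructor; intuition eauto using tclos_val.
  all: repeat split; auto.
Qed.

Lemma tclos_plug_reducible F x x' b : eval_ctx F -> step x x' -> tclos E (plug F x) b ->
  exists F' y, b = plug F' y /\ ectx_clos E F F' /\ tclos E x y.
Proof.
  intros HF Hx; induction F in b, HF |- *; simpl in HF |- *; intros Hb.
  - exists Hole, b; repeat split; auto; constructor.
  - inversion Hb as [? ? Hbase | | | | | ? v' ? b' Hv Hrest]; subst.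
    + destruct (environment_irreducible E _ _ E_env Hbase _ (step_plug (ArgCtx v F) _ _ HF Hx)).
    + destruct (IHF b') as (F' & y & -> & HF' & Hy); [tauto | exact Hrest |].
      exists (ArgCtx v' F'), y; repeat split; auto; constructor; auto.
  - inversion Hb as [? ? Hbase | | | | | ? b' ? u' Hrest Hu]; subst.
    + destruct (environment_irreducible E _ _ E_env Hbase _ (step_plug (FunCtx F t) _ _ HF Hx)).
    + destruct (IHF b') as (F' & y & -> & HF' & Hy); [exact HF | exact Hrest |].
      exists (FunCtx F' u'), y; repeat split; auto; constructor; auto.
  - inversion Hb as [? ? Hbase | | | | ? b' Hrest | ]; subst.
    + destruct (environment_irreducible E _ _ E_env Hbase _ (step_plug (ResetCtx F) _ _ HF Hx)).
    + destruct (IHF b') as (F' & y & -> & HF' & Hy); [exact HF | exact Hrest |].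
      exists (ResetCtx F'), y; repeat split; auto; constructor; auto.
Qed.

Lemma tclos_pure_plug_shift E0 s y : pure_ctx E0 -> tclos E (plug E0 (Shift s)) y ->
  (exists E1 s', y = plug E1 (Shift s') /\ ectx_clos E E0 E1 /\ tclos E s s') \/
  (exists E0a E0b E1a q, E0 = ectx_comp E0a E0b /\ ectx_clos E E0a E1a /\
     E (plug E0b (Shift s)) q /\ y = plug E1a q).
Proof.
  induction E0 in y |- *; simpl; intros HE0 Hy.
  - inversion Hy as [? ? Hbase | | | ? s' Hs | | ]; subst.
    + right; exists Hole, Hole, Hole, y; repeat split; auto; constructor.
    + left; exists Hole, s'; repeat split; auto; constructor.
  - inversion Hy as [? ? Hbase | | | | | ? v' ? y' Hv Hrest]; subst.
    + right; exists Hole, (ArgCtx v E0), Hole, y; repeat split; auto; constructor.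
    + destruct (IHE0 y')
        as [(E1 & s' & -> & HE1 & Hs) | (E0a & E0b & E1a & q & -> & HE1a & Hq & ->)];
        [tauto | exact Hrest | left | right].
      * exists (ArgCtx v' E1), s'; repeat split; auto; constructor; auto.
      * exists (ArgCtx v E0a), E0b, (ArgCtx v' E1a), q; repeat split; auto; constructor; auto.
  - inversion Hy as [? ? Hbase | | | | | ? y' ? u' Hrest Hu]; subst.
    + right; exists Hole, (FunCtx E0 t), Hole, y; repeat split; auto; constructor.
    + destruct (IHE0 y')
        as [(E1 & s' & -> & HE1 & Hs) | (E0a & E0b & E1a & q & -> & HE1a & Hq & ->)];
        [exact HE0 | exact Hrest | left | right].
      * exists (FunCtx E1 u'), s'; repeat split; auto; constructor; auto.
      * exists (FunCtx E0a t), E0b, (FunCtx E1a u'), q; repeat split; auto; constructor; auto.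
  - contradiction.
Qed.

Lemma environment_pure_plug_shift E0 s q : pure_ctx E0 -> E (plug E0 (Shift s)) q ->
  exists E1 s', pure_ctx E1 /\ q = plug E1 (Shift s').
Proof.
  intros HE0 Hq; apply stuck_pure_plug_shift.
  - apply (environment_closed_rel E E_env _ _ Hq).
  - apply (environment_not_val E _ _ E_env Hq), pure_plug_shift_not_val, HE0.
Qed.

Lemma tclos_pure_plug_shift_stuck E0 s y : pure_ctx E0 ->
  tclos E (plug E0 (Shift s)) y -> stuck y.
Proof.
  intros HE0 Hy.
  destruct (tclos_pure_plug_shift E0 s y HE0 Hy)
    as [(E1 & s' & -> & HE1 & _) | (E0a & E0b & E1a & q & -> & HE1a & Hq & ->)].
  - apply pure_plug_shift_stuck; eapply ectx_clos_pure_ctx; eauto.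
  - apply pure_ctx_comp_inv in HE0 as [HE0a HE0b].
    destruct (environment_pure_plug_shift E0b s q HE0b Hq) as (E1b & s1 & HE1b & ->).
    rewrite <- plug_comp; apply pure_plug_shift_stuck, pure_ctx_comp; auto.
    eapply ectx_clos_pure_ctx; eauto.
Qed.

Lemma tclos_irreducible_same_outcome a b : tclos E a b -> closed a -> irreducible a ->
  same_outcome b a.
Proof.
  intros Hab Ha Hirr; apply same_outcome_normal_forms.
  destruct (progress a Ha) as [Hv | [[a' Hs] | (E0 & s & HE0 & ->)]].
  - left; split; eauto using tclos_val.
  - destruct (Hirr a' Hs).
  - right; split; [apply pure_plug_shift_stuck, HE0 |].
    eapply tclos_pure_plug_shift_stuck; eauto.
Qed.

End Environment.

(** * Soundness of environmental bisimulations in evaluation contexts *)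

Section UpToContext.
Variable X : envrel.
Hypothesis X_envrel : is_envrel X.
Hypothesis X_bisim : env_bisim X.

Lemma X_env_environment E : X_env X E -> environment E.
Proof. apply (proj1 X_envrel). Qed.

Inductive upto_ctx : term -> term -> Prop :=
| upto_env E a b : X_env X E -> tclos E a b -> upto_ctx a b
| upto_trip E F0 F1 s0 s1 : X_trip X E s0 s1 -> ectx_clos E F0 F1 -> eval_ctx F0 ->
    upto_ctx (plug F0 s0) (plug F1 s1).

Lemma env_beta_sim E t w x : X_env X E -> is_val w ->
  tclos E (App (Lam t) w) x -> closed (App (Lam t) w) -> closed x ->
  exists x', step x x' /\ (tclos E (subst0 w t) x' \/ X_trip X E (subst0 w t) x').
Proof.
  intros HXE Hw Hx Hc Hcx; pose proof (X_env_environment E HXE) as HE.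
  inversion Hx as [? ? Hbase | | | | | ? y ? z Hy Hz]; subst.
  { destruct (environment_irreducible E _ _ HE Hbase _ (head_step_step _ _ (head_beta t w Hw))). }
  assert (Hz_val : is_val z) by (eapply tclos_val; eauto).
  destruct Hc as [_ Hcw], Hcx as [_ Hcz].
  inversion Hy as [? ? Hbase | | ? t' Ht | | | ]; subst.
  - destruct (environment_val E _ _ HE Hbase) as [t' ->]; [eexists; eauto |].
    exists (subst0 z t'); split; [apply head_step_step; constructor; exact Hz_val |].
    right; apply (proj1 (proj2 X_bisim E HXE)); auto; repeat split; auto.
  - exists (subst0 z t'); split; [apply head_step_step; constructor; exact Hz_val |].
    left; apply tclos_subst; auto using environment_closed_rel.
Qed.

Lemma env_shift_sim E E0 t x : X_env X E -> pure_ctx E0 ->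
  tclos E (Reset (plug E0 (Shift t))) x -> closed (Reset (plug E0 (Shift t))) -> closed x ->
  exists x', step x x' /\
    (tclos E (Reset (subst0 (capture E0) t)) x' \/ X_trip X E (Reset (subst0 (capture E0) t)) x').
Proof.
  intros HXE HE0 Hx Hc Hcx; pose proof (X_env_environment E HXE) as HE.
  pose proof (environment_closed_rel E HE) as HEc.
  inversion Hx as [? ? Hbase | | | | ? y Hy | ]; subst.
  { destruct (environment_irreducible E _ _ HE Hbase _
      (head_step_step _ _ (head_shift E0 t HE0))). }
  destruct (tclos_pure_plug_shift E E0 t y HE0 Hy)
    as [(E1 & t' & -> & HE1 & Ht) | (E0a & E0b & E1a & q & -> & HE1a & Hq & ->)].
  - exists (Reset (subst0 (capture E1) t')); split.
    + apply head_step_step; constructor; eapply ectx_clos_pure_ctx; eauto.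
    + left; tclos_congr; apply tclos_subst; auto.
      unfold capture; do 2 tclos_congr.
      apply ectx_clos_plug; [apply ectx_clos_lift; auto | apply tclos_refl].
  - apply pure_ctx_comp_inv in HE0 as [HE0a HE0b].
    destruct (environment_pure_plug_shift E HE E0b t q HE0b Hq) as (E1b & t1 & HE1b & ->).
    assert (HE1a_pure : pure_ctx E1a) by (eapply ectx_clos_pure_ctx; eauto).
    exists (Reset (subst0 (capture (ectx_comp E1a E1b)) t1)); split.
    + rewrite <- plug_comp; apply head_step_step; constructor; apply pure_ctx_comp; auto.
    + right; rewrite !capture_comp.
      unfold closed in Hc, Hcx; simpl in Hc, Hcx.
      rewrite closed_at_plug, closed_at_ectx_comp in Hc; rewrite closed_at_plug in Hcx.
      apply (proj2 (proj2 X_bisim E HXE)); auto.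
      apply ectx_clos_hat; auto using pure_ctx_eval_ctx; tauto.
Qed.

Lemma env_head_step_sim E r r' x : X_env X E -> head_step r r' ->
  tclos E r x -> closed r -> closed x ->
  exists x', step x x' /\ (tclos E r' x' \/ X_trip X E r' x').
Proof.
  intros HXE [t w Hw | E0 t HE0 | v Hv] Hx Hc Hcx.
  - eapply env_beta_sim; eauto.
  - eapply env_shift_sim; eauto.
  - pose proof (X_env_environment E HXE) as HE.
    inversion Hx as [? ? Hbase | | | | ? z Hz | ]; subst.
    { destruct (environment_irreducible E _ _ HE Hbase _ (head_step_step _ _ (head_reset v Hv))). }
    exists z; split; auto.
    apply head_step_step; constructor; eapply tclos_val; eauto.
Qed.

Lemma upto_env_step E a b a' : X_env X E -> tclos E a b -> closed a -> step a a' ->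
  exists b', star b b' /\ upto_ctx a' b'.
Proof.
  intros HXE Hab Ha Hs; pose proof (X_env_environment E HXE) as HE.
  assert (Hb : closed b)
    by exact (proj1 (tclos_closed_at E a b 0 (environment_closed_rel E HE) Hab) Ha).
  apply step_iff in Hs as (F & r & r' & HF & Hr & -> & ->).
  destruct (tclos_plug_reducible E HE F r r' b HF (head_step_step _ _ Hr) Hab)
    as (F' & x & -> & HFF & Hrx).
  apply closed_at_plug in Ha as [_ Hcr]; apply closed_at_plug in Hb as [_ Hcx].
  destruct (env_head_step_sim E r r' x HXE Hr Hrx Hcr Hcx) as (x' & Hx & [Hrel | Htrip]).
  all: exists (plug F' x'); split; [apply star_one, step_plug; eauto using ectx_clos_eval_ctx |].
  - apply (upto_env E); auto; apply ectx_clos_plug; auto.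
  - apply (upto_trip E); auto.
Qed.

Lemma upto_trip_normal E F0 F1 s0 s1 : X_trip X E s0 s1 -> ectx_clos E F0 F1 -> eval_ctx F0 ->
  normal_form s0 -> exists E' b', X_env X E' /\ star (plug F1 s1) b' /\ tclos E' (plug F0 s0) b'.
Proof.
  intros Ht HF HF0 Hnf; destruct (proj2 X_envrel E s0 s1 Ht) as (HE & _ & _).
  destruct (proj1 X_bisim E s0 s1 Ht) as (_ & Hval & Hstuck & _).
  assert (exists s1', star s1 s1' /\ X_env X (rel_add E s0 s1')) as (s1' & Hs1 & HXE').
  { destruct Hnf as [Hv | Hst];
      [destruct (Hval Hv) as (v1 & ? & _ & ?) | destruct (Hstuck Hst) as (v1 & ? & _ & ?)]; eauto. }
  exists (rel_add E s0 s1'), (plug F1 s1'); repeat split; auto.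
  - apply star_plug; eauto using ectx_clos_eval_ctx.
  - apply ectx_clos_plug; [| apply tc_base; right; auto].
    apply (ectx_clos_mono E); [unfold rel_add; auto | exact HF].
Qed.

Lemma upto_step a b a' : upto_ctx a b -> closed a -> step a a' ->
  exists b', star b b' /\ upto_ctx a' b'.
Proof.
  intros Hup; destruct Hup as [E a0 b0 HXE Hab | E F0 F1 s0 s1 Ht HF HF0]; intros Ha Hs;
    [eapply upto_env_step; eauto |].
  destruct (proj2 X_envrel E s0 s1 Ht) as (HE & Hc0 & _).
  destruct (progress_normal_form s0 Hc0) as [[s0' Hs0] | Hnf].
  - destruct (proj1 (proj1 X_bisim E s0 s1 Ht) s0' Hs0) as (s1' & Hs1 & Ht').
    rewrite (step_det _ _ _ Hs (step_plug F0 _ _ HF0 Hs0)).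
    exists (plug F1 s1'); split; [apply star_plug; eauto using ectx_clos_eval_ctx |].
    apply (upto_trip E); auto.
  - destruct (upto_trip_normal E F0 F1 s0 s1 Ht HF HF0 Hnf) as (E' & b' & HXE' & Hb' & Hab').
    destruct (upto_env_step E' _ b' a' HXE' Hab' Ha Hs) as (b'' & Hb'' & Hup).
    exists b''; split; eauto using star_trans.
Qed.

Lemma upto_irreducible a b : upto_ctx a b -> closed a -> irreducible a -> same_outcome b a.
Proof.
  intros Hup; destruct Hup as [E a0 b0 HXE Hab | E F0 F1 s0 s1 Ht HF HF0]; intros Ha Hirr.
  - apply (tclos_irreducible_same_outcome E); auto using X_env_environment.
  - destruct (proj2 X_envrel E s0 s1 Ht) as (HE & Hc0 & _).
    destruct (progress_normal_form s0 Hc0) as [[s0' Hs0] | Hnf].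
    + destruct (Hirr _ (step_plug F0 _ _ HF0 Hs0)).
    + destruct (upto_trip_normal E F0 F1 s0 s1 Ht HF HF0 Hnf) as (E' & b' & HXE' & Hb' & Hab').
      apply same_outcome_star with b'; auto.
      apply (tclos_irreducible_same_outcome E'); auto using X_env_environment.
Qed.

Lemma upto_star a b t : irreducible t -> star a t -> upto_ctx a b -> closed a ->
  same_outcome b t.
Proof.
  intros Hirr Hs; revert Hirr b.
  induction Hs as [a0 | a0 a1 t0 Hs _ IH]; intros Hirr b Hab Ha.
  - apply upto_irreducible; auto.
  - destruct (upto_step a0 b a1 Hab Ha Hs) as (b1 & Hb1 & Hab1).
    apply same_outcome_star with b1; auto.
    apply IH; auto; eapply closed_step; eauto.
Qed.

Lemma env_bisim_eval_ctx_sound E s0 s1 G t : X_trip X E s0 s1 -> eval_ctx G ->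
  closed_at_ectx 0 G -> star (plug G s0) t -> irreducible t -> same_outcome (plug G s1) t.
Proof.
  intros Ht HG HGc Hs Hirr; apply (upto_star (plug G s0)); auto.
  - apply (upto_trip E); auto using ectx_clos_refl.
  - apply closed_at_plug; split; [exact HGc | apply (proj2 X_envrel E s0 s1 Ht)].
Qed.

End UpToContext.

Definition envrel_flip (X : envrel) : envrel :=
  EnvRel (fun E => exists E0, X_env X E0 /\ forall a b, E a b <-> E0 b a)
         (fun E t0 t1 => exists E0, X_trip X E0 t1 t0 /\ forall a b, E a b <-> E0 b a).

Section Flip.
Variables E E0 : rel.
Hypothesis E_flip : forall a b, E a b <-> E0 b a.

Lemma tclos_flip x y : tclos E x y -> tclos E0 y x.
Proof. induction 1; [apply tc_base, E_flip; auto | tclos_congr; auto ..]. Qed.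

Lemma tilde_flip x y : tilde E x y -> tilde E0 y x.
Proof. intros (Hxy & Hx & Hy); repeat split; auto using tclos_flip. Qed.

Lemma hat_flip F F' : hat E F F' -> hat E0 F' F.
Proof. induction 1; constructor; auto using tilde_flip. Qed.

Lemma environment_flip : environment E0 -> environment E.
Proof.
  intros HE0 a b Hab; apply E_flip in Hab.
  destruct (HE0 _ _ Hab) as (? & ? & [[? ?] | [? ?]]); tauto.
Qed.

Lemma rel_add_flip a b x y : rel_add E a b x y <-> rel_add E0 b a y x.
Proof. unfold rel_add; rewrite E_flip; tauto. Qed.

End Flip.

Lemma is_envrel_flip X : is_envrel X -> is_envrel (envrel_flip X).
Proof.
  intros [Henv Htrip]; split; simpl.
  - intros E (E0 & HE0 & Hflip); apply (environment_flip E E0 Hflip); auto.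
  - intros E t0 t1 (E0 & Ht & Hflip); destruct (Htrip _ _ _ Ht) as (HE0 & Hc1 & Hc0).
    split; [apply (environment_flip E E0 Hflip); auto | auto].
Qed.

Lemma env_bisim_flip X : env_bisim X -> env_bisim (envrel_flip X).
Proof.
  intros [Htrip Henv]; split; simpl.
  - intros E t0 t1 (E0 & Ht & Hflip).
    destruct (Htrip _ _ _ Ht) as (Hs1 & Hv1 & Hst1 & Hs0 & Hv0 & Hst0).
    repeat split.
    + intros t0' Hs; destruct (Hs0 _ Hs) as (t1' & ? & ?); eauto.
    + intros Hv; destruct (Hv0 Hv) as (v1 & ? & ? & ?); exists v1; split; [| split]; auto.
      exists (rel_add E0 v1 t0); split; [assumption | intros; apply (rel_add_flip E E0 Hflip)].
    + intros Hv; destruct (Hst0 Hv) as (v1 & ? & ? & ?); exists v1; split; [| split]; auto.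
      exists (rel_add E0 v1 t0); split; [assumption | intros; apply (rel_add_flip E E0 Hflip)].
    + intros t1' Hs; destruct (Hs1 _ Hs) as (t0' & ? & ?); eauto.
    + intros Hv; destruct (Hv1 Hv) as (v0 & ? & ? & ?); exists v0; split; [| split]; auto.
      exists (rel_add E0 t1 v0); split; [assumption | intros; apply (rel_add_flip E E0 Hflip)].
    + intros Hv; destruct (Hst1 Hv) as (v0 & ? & ? & ?); exists v0; split; [| split]; auto.
      exists (rel_add E0 t1 v0); split; [assumption | intros; apply (rel_add_flip E E0 Hflip)].
  - intros E (E0 & HE0 & Hflip); destruct (Henv _ HE0) as [Hlam Hshift]; split.
    + intros t0 t1 v0 v1 HE Hv0 Hv1 Hvv; exists E0; split; [| exact Hflip].
      apply Hlam; auto; [apply Hflip, HE | apply (tilde_flip E E0 Hflip), Hvv].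
    + intros F0 F1 t0 t1 F0' F1' HF0 HF1 HE HF0' HF1' Hh; exists E0; split; [| exact Hflip].
      apply Hshift; auto; [apply Hflip, HE | apply (hat_flip E E0 Hflip), Hh].
Qed.

(** * From evaluation contexts to arbitrary contexts *)

Inductive tclos_n (R : rel) : nat -> term -> term -> Prop :=
| tcn_base p q : R p q -> tclos_n R 1 p q
| tcn_var n : tclos_n R 0 (Var n) (Var n)
| tcn_lam k t0 t1 : tclos_n R k t0 t1 -> tclos_n R k (Lam t0) (Lam t1)
| tcn_shift k t0 t1 : tclos_n R k t0 t1 -> tclos_n R k (Shift t0) (Shift t1)
| tcn_reset k t0 t1 : tclos_n R k t0 t1 -> tclos_n R k (Reset t0) (Reset t1)
| tcn_app k1 k2 t0 t1 u0 u1 : tclos_n R k1 t0 t1 -> tclos_n R k2 u0 u1 ->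
    tclos_n R (k1 + k2) (App t0 u0) (App t1 u1).

Inductive ectx_clos_n (R : rel) : nat -> ectx -> ectx -> Prop :=
| ecn_hole : ectx_clos_n R 0 Hole Hole
| ecn_arg k1 k2 v v' F F' : tclos_n R k1 v v' -> ectx_clos_n R k2 F F' ->
    ectx_clos_n R (k1 + k2) (ArgCtx v F) (ArgCtx v' F')
| ecn_fun k1 k2 F F' u u' : ectx_clos_n R k1 F F' -> tclos_n R k2 u u' ->
    ectx_clos_n R (k1 + k2) (FunCtx F u) (FunCtx F' u')
| ecn_reset k F F' : ectx_clos_n R k F F' -> ectx_clos_n R k (ResetCtx F) (ResetCtx F').

Section CountedClosure.
Variable R : rel.

Lemma tclos_n_tclos k t t' : tclos_n R k t t' -> tclos R t t'.
Proof. induction 1; [apply tc_base; auto | tclos_congr; auto ..]. Qed.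

Lemma tclos_tclos_n t t' : tclos R t t' -> exists k, tclos_n R k t t'.
Proof.
  induction 1 as [| | ? ? ? [k Hk] | ? ? ? [k Hk] | ? ? ? [k Hk] | ? ? ? ? ? [k1 H1] ? [k2 H2]];
    [exists 1; apply tcn_base | exists 0; apply tcn_var | exists k; apply tcn_lam
    | exists k; apply tcn_shift | exists k; apply tcn_reset
    | exists (k1 + k2); apply tcn_app]; auto.
Qed.

Lemma tclos_n_refl t : tclos_n R 0 t t.
Proof. induction t; try (constructor; auto); apply (tcn_app R 0 0); auto. Qed.

Lemma ectx_clos_n_plug k F F' j x x' : ectx_clos_n R k F F' -> tclos_n R j x x' ->
  tclos_n R (k + j) (plug F x) (plug F' x').
Proof.
  induction 1 in j, x, x' |- *; simpl; intros Hx; auto.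
  - replace (k1 + k2 + j) with (k1 + (k2 + j)) by lia; constructor; auto.
  - replace (k1 + k2 + j) with ((k1 + j) + k2) by lia; constructor; auto.
  - constructor; auto.
Qed.

Lemma ectx_clos_n_comp k1 k2 F F' G G' : ectx_clos_n R k1 F F' -> ectx_clos_n R k2 G G' ->
  ectx_clos_n R (k1 + k2) (ectx_comp F G) (ectx_comp F' G').
Proof.
  induction 1; simpl; intros HG; auto.
  - rewrite <- Nat.add_assoc; constructor; auto.
  - replace (k1 + k0 + k2) with ((k1 + k2) + k0) by lia; constructor; auto.
  - constructor; auto.
Qed.

Lemma ectx_clos_n_ectx_clos k F F' : ectx_clos_n R k F F' -> ectx_clos R F F'.
Proof. induction 1; constructor; eauto using tclos_n_tclos. Qed.

Lemma ectx_clos_n_pure_ctx k F F' : ectx_clos_n R k F F' ->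
  pure_ctx F -> eval_ctx F' -> pure_ctx F'.
Proof. induction 1; simpl; tauto. Qed.

End CountedClosure.

Section ContextLemma.
Variable R : rel.
Hypothesis R_closed : closed_rel R.
Hypothesis R_eval_ctx : forall p q G t, R p q -> eval_ctx G -> closed_at_ectx 0 G ->
  star (plug G p) t -> irreducible t -> same_outcome (plug G q) t.

(* [b] arises from [a] by [k] replacements, one of which is a pair of [R] in
   evaluation position. *)
Definition exposed (k : nat) (a b : term) : Prop :=
  exists G0 G1 j p q, R p q /\ ectx_clos_n R j G0 G1 /\ eval_ctx G0 /\ eval_ctx G1 /\
    a = plug G0 p /\ b = plug G1 q /\ k = S j.

Lemma exposed_at G0 G1 j p q : R p q -> ectx_clos_n R j G0 G1 -> eval_ctx G0 -> eval_ctx G1 ->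
  exposed (S j) (plug G0 p) (plug G1 q).
Proof. intros; exists G0, G1, j, p, q; repeat split; auto. Qed.

Lemma exposed_base p q : R p q -> exposed 1 p q.
Proof. intros Hpq; apply (exposed_at Hole Hole); simpl; auto; constructor. Qed.

Lemma exposed_plug j F F' k a b : ectx_clos_n R j F F' -> eval_ctx F -> eval_ctx F' ->
  exposed k a b -> exposed (j + k) (plug F a) (plug F' b).
Proof.
  intros HFF HF HF' (G0 & G1 & i & p & q & Hpq & HG & HG0 & HG1 & -> & -> & ->).
  rewrite <- !plug_comp, Nat.add_succ_r.
  apply exposed_at; auto using ectx_clos_n_comp, eval_ctx_comp.
Qed.

Lemma replace_decomp F x k b : eval_ctx F -> tclos_n R k (plug F x) b ->
  (exists F' x' k1 k2, b = plug F' x' /\ ectx_clos_n R k1 F F' /\ eval_ctx F' /\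
     tclos_n R k2 x x' /\ k = k1 + k2) \/ exposed k (plug F x) b.
Proof.
  induction F in k, b |- *; simpl; intros HF Hb.
  - left; exists Hole, b, 0, k; repeat split; auto; constructor.
  - inversion Hb as [? ? Hbase | | | | | k1 k2 ? v' ? b' Hv Hrest]; subst;
      [right; apply exposed_base, Hbase |].
    destruct HF as [[s ->] HF].
    inversion Hv as [? ? Hbase | | ? ? s' Hs | | | ]; subst.
    + right; apply (exposed_at (FunCtx Hole (plug F x)) (FunCtx Hole b') k2); simpl; auto.
      apply (ecn_fun R 0 k2); [constructor | exact Hrest].
    + destruct (IHF k2 b' HF Hrest) as [(F' & x' & j1 & j2 & -> & HFF & HF' & Hx & ->) | Hexp].
      * left; exists (ArgCtx (Lam s') F'), x', (k1 + j1), j2; simpl; repeat split; auto;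
          [constructor; auto | eexists; eauto | lia].
      * right; apply (exposed_plug k1 (ArgCtx (Lam s) Hole) (ArgCtx (Lam s') Hole)); simpl; auto.
        -- rewrite <- (Nat.add_0_r k1); constructor; [exact Hv | constructor].
        -- split; [eexists; eauto | exact I].
        -- split; [eexists; eauto | exact I].
  - inversion Hb as [? ? Hbase | | | | | k1 k2 ? b' ? u' Hrest Hu]; subst;
      [right; apply exposed_base, Hbase |].
    destruct (IHF k1 b' HF Hrest) as [(F' & x' & j1 & j2 & -> & HFF & HF' & Hx & ->) | Hexp].
    + left; exists (FunCtx F' u'), x', (j1 + k2), j2; simpl; repeat split; auto;
        [constructor; auto | lia].
    + right; rewrite Nat.add_comm.
      apply (exposed_plug k2 (FunCtx Hole t) (FunCtx Hole u')); simpl; auto.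
      apply (ecn_fun R 0 k2); [constructor | exact Hu].
  - inversion Hb as [? ? Hbase | | | | ? ? b' Hrest | ]; subst;
      [right; apply exposed_base, Hbase |].
    destruct (IHF k b' HF Hrest) as [(F' & x' & j1 & j2 & -> & HFF & HF' & Hx & ->) | Hexp].
    + left; exists (ResetCtx F'), x', j1, j2; simpl; repeat split; auto; constructor; auto.
    + right; apply (exposed_plug 0 (ResetCtx Hole) (ResetCtx Hole)); simpl; auto.
      do 2 constructor.
Qed.

Lemma replace_beta t w k x : is_val w -> tclos_n R k (App (Lam t) w) x ->
  (exists x', step x x' /\ tclos R (subst0 w t) x') \/ exposed k (App (Lam t) w) x.
Proof.
  intros Hw Hx; inversion Hx as [? ? Hbase | | | | | j1 j2 ? y ? z Hy Hz]; subst;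
    [right; apply exposed_base, Hbase |].
  inversion Hy as [? ? Hbase | | ? ? t' Ht | | | ]; subst.
  - right; apply (exposed_at (FunCtx Hole w) (FunCtx Hole z) j2); simpl; auto.
    apply (ecn_fun R 0 j2); [constructor | exact Hz].
  - destruct Hw as [u ->].
    inversion Hz as [? ? Hbase | | ? ? u' Hu | | | ]; subst.
    + right; rewrite Nat.add_1_r.
      apply (exposed_at (ArgCtx (Lam t) Hole) (ArgCtx (Lam t') Hole)); simpl; auto.
      * rewrite <- (Nat.add_0_r j1); constructor; [exact Hy | constructor].
      * split; [eexists; eauto | exact I].
      * split; [eexists; eauto | exact I].
    + left; exists (subst0 (Lam u') t'); split.
      * apply head_step_step; constructor; eexists; eauto.
      * apply tclos_subst; eauto using tclos_n_tclos.
Qed.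

Lemma replace_shift E0 t k x : pure_ctx E0 -> tclos_n R k (Reset (plug E0 (Shift t))) x ->
  (exists x', step x x' /\ tclos R (Reset (subst0 (capture E0) t)) x') \/
  exposed k (Reset (plug E0 (Shift t))) x.
Proof.
  intros HE0 Hx; inversion Hx as [? ? Hbase | | | | ? ? y Hy | ]; subst;
    [right; apply exposed_base, Hbase |].
  destruct (replace_decomp E0 (Shift t) k y (pure_ctx_eval_ctx E0 HE0) Hy)
    as [(E1 & y' & j1 & j2 & -> & HE & HE1 & Hy' & ->) | Hexp].
  - inversion Hy' as [? ? Hbase | | | ? ? t' Ht | | ]; subst.
    + right; rewrite Nat.add_1_r.
      apply (exposed_at (ResetCtx E0) (ResetCtx E1)); simpl; auto using pure_ctx_eval_ctx.
      constructor; exact HE.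
    + left; exists (Reset (subst0 (capture E1) t')); split.
      * apply head_step_step; constructor; eapply ectx_clos_n_pure_ctx; eauto.
      * tclos_congr; apply tclos_subst; eauto using tclos_n_tclos.
        unfold capture; do 2 tclos_congr.
        apply ectx_clos_plug; [| apply tclos_refl].
        apply ectx_clos_lift; eauto using ectx_clos_n_ectx_clos.
  - right; apply (exposed_plug 0 (ResetCtx Hole) (ResetCtx Hole)); simpl; auto.
    do 2 constructor.
Qed.

Lemma replace_reset v k x : is_val v -> tclos_n R k (Reset v) x ->
  (exists x', step x x' /\ tclos R v x') \/ exposed k (Reset v) x.
Proof.
  intros [u ->] Hx; inversion Hx as [? ? Hbase | | | | ? ? z Hz | ]; subst;
    [right; apply exposed_base, Hbase |].
  inversion Hz as [? ? Hbase | | ? ? u' Hu | | | ]; subst.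
  - right; apply (exposed_at (ResetCtx Hole) (ResetCtx Hole) 0); simpl; auto.
    do 2 constructor.
  - left; exists (Lam u'); split.
    + apply head_step_step; constructor; eexists; eauto.
    + eapply tclos_n_tclos; eauto.
Qed.

Lemma replace_step a a' k b : step a a' -> tclos_n R k a b ->
  (exists b', step b b' /\ tclos R a' b') \/ exposed k a b.
Proof.
  intros (F & r & r' & HF & Hr & -> & ->)%step_iff Hab.
  destruct (replace_decomp F r k b HF Hab)
    as [(F' & x & k1 & k2 & -> & HFF & HF' & Hx & ->) | Hexp]; [| right; exact Hexp].
  assert (Hhead : (exists x', step x x' /\ tclos R r' x') \/ exposed k2 r x)
    by (destruct Hr; eauto using replace_beta, replace_shift, replace_reset).
  destruct Hhead as [(x' & Hx' & Hrx') | Hexp].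
  - left; exists (plug F' x'); split; [apply step_plug; auto |].
    apply ectx_clos_plug; eauto using ectx_clos_n_ectx_clos.
  - right; apply exposed_plug; auto.
Qed.

Lemma replace_irreducible a k b : closed a -> irreducible a -> tclos_n R k a b ->
  same_outcome b a \/ exposed k a b.
Proof.
  intros Ha Hirr Hab.
  destruct (progress a Ha) as [[s ->] | [[a' Hs] | (E0 & s & HE0 & ->)]].
  - inversion Hab as [? ? Hbase | | ? ? s' Hs | | | ]; subst;
      [right; apply exposed_base, Hbase |].
    left; apply same_outcome_normal_forms; left; split; eexists; eauto.
  - destruct (Hirr a' Hs).
  - destruct (replace_decomp E0 (Shift s) k b (pure_ctx_eval_ctx E0 HE0) Hab)
      as [(E1 & x & j1 & j2 & -> & HE & HE1 & Hx & ->) | Hexp]; [| right; exact Hexp].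
    inversion Hx as [? ? Hbase | | | ? ? s' Hs | | ]; subst.
    + right; rewrite Nat.add_1_r; apply exposed_at; auto using pure_ctx_eval_ctx.
    + left; apply same_outcome_normal_forms; right.
      split; apply pure_plug_shift_stuck; [exact HE0 | eapply ectx_clos_n_pure_ctx; eauto].
Qed.

Lemma tclos_n_closed k a b : tclos_n R k a b -> closed a -> closed b.
Proof. intros Hab; apply (tclos_closed_at R a b 0 R_closed), (tclos_n_tclos R k), Hab. Qed.

Lemma exposed_same_outcome k a b t : exposed k a b -> closed a ->
  (forall j b', j < k -> tclos_n R j a b' -> same_outcome b' t) -> same_outcome b t.
Proof.
  intros (G0 & G1 & j & p & q & Hpq & HG & HG0 & HG1 & -> & -> & ->) Ha IH.
  assert (Hmid : tclos_n R j (plug G0 p) (plug G1 p))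
    by (rewrite <- (Nat.add_0_r j); apply ectx_clos_n_plug, tclos_n_refl; exact HG).
  destruct (IH j (plug G1 p) (Nat.lt_succ_diag_r j) Hmid) as (t2 & Ht2 & Hirr2 & Hval2).
  assert (HG1c : closed_at_ectx 0 G1)
    by exact (proj1 (proj1 (closed_at_plug G1 0 p) (tclos_n_closed _ _ _ Hmid Ha))).
  destruct (R_eval_ctx p q G1 t2 Hpq HG1 HG1c Ht2 Hirr2) as (t3 & Ht3 & Hirr3 & Hval3).
  exists t3; split; [| split]; auto; rewrite Hval2; exact Hval3.
Qed.

(* Lexicographic induction on the length of the reduction of [a] and on the
   number [k] of replaced subterms. *)
Lemma tclos_n_same_outcome a t : irreducible t -> star a t ->
  forall k b, tclos_n R k a b -> closed a -> same_outcome b t.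
Proof.
  intros Hirr Hs; revert Hirr.
  induction Hs as [a0 | a0 a1 t0 Hs _ IH]; intros Hirr k;
    induction k as [k IHk] using lt_wf_ind; intros b Hab Ha.
  - destruct (replace_irreducible a0 k b Ha Hirr Hab) as [Hsame | Hexp]; auto.
    apply (exposed_same_outcome k a0); auto.
    intros j b' Hj Hjb; exact (IHk j Hj b' Hjb Ha).
  - destruct (replace_step a0 a1 k b Hs Hab) as [(b1 & Hb1 & Hab1) | Hexp].
    + destruct (tclos_tclos_n R _ _ Hab1) as [k1 Hk1].
      apply same_outcome_star with b1; [apply star_one, Hb1 |].
      apply (IH Hirr k1); auto; eapply closed_step; eauto.
    + apply (exposed_same_outcome k a0); auto.
      intros j b' Hj Hjb; exact (IHk j Hj b' Hjb Ha).
Qed.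

Lemma tclos_same_outcome a b t : tclos R a b -> closed a -> star a t -> irreducible t ->
  same_outcome b t.
Proof.
  intros Hab Ha Hs Hirr; destruct (tclos_tclos_n R a b Hab) as [k Hk].
  exact (tclos_n_same_outcome a t Hirr Hs k b Hk Ha).
Qed.

End ContextLemma.

Lemma tclos_cfill (R : rel) C p q : R p q -> tclos R (cfill C p) (cfill C q).
Proof.
  intros Hpq; induction C; simpl; try (tclos_congr; auto using tclos_refl).
  apply tc_base, Hpq.
Qed.

Lemma cfill_same_outcome p q C : closed p -> closed q ->
  (forall G t, eval_ctx G -> closed_at_ectx 0 G -> star (plug G p) t -> irreducible t ->
     same_outcome (plug G q) t) ->
  closed (cfill C p) -> forall t, evals_to (cfill C p) t -> same_outcome (cfill C q) t.
Proof.
  intros Hp Hq Heval HC t [Hs Hirr].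
  apply (tclos_same_outcome (fun a b => a = p /\ b = q)) with (cfill C p); auto.
  - intros a b [-> ->]; auto.
  - intros a b G t' [-> ->]; apply Heval.
  - apply tclos_cfill; auto.
Qed.

Lemma same_outcome_evals_to a b : (forall t, evals_to a t -> same_outcome b t) ->
  ((exists v, evals_to a v /\ is_val v) -> exists v, evals_to b v /\ is_val v) /\
  ((exists s, evals_to a s /\ stuck s) -> exists s, evals_to b s /\ stuck s).
Proof.
  intros Hsame; split.
  - intros (v & Hv & Hval); destruct (Hsame v Hv) as (v' & Hs & Hirr & Hvv).
    exists v'; repeat split; auto; apply Hvv, Hval.
  - intros (s & Hs & [Hnv Hirr]); destruct (Hsame s Hs) as (s' & Hs' & Hirr' & Hss).
    exists s'; repeat split; auto; rewrite <- Hss; exact Hnv.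
Qed.

Theorem corollary1 (t0 t1 : term) :
  closed t0 -> closed t1 -> bisimilar empty_env t0 t1 -> ctx_equiv t0 t1.
Proof.
  intros H0 H1 (X & HX & HXb & Ht) C HC0 HC1.
  assert (Hflip : X_trip (envrel_flip X) empty_env t1 t0)
    by (exists empty_env; split; [exact Ht | unfold empty_env; tauto]).
  destruct (same_outcome_evals_to (cfill C t0) (cfill C t1)) as [Hval01 Hstuck01].
  { apply cfill_same_outcome; auto.
    intros G t; apply (env_bisim_eval_ctx_sound X HX HXb empty_env); exact Ht. }
  destruct (same_outcome_evals_to (cfill C t1) (cfill C t0)) as [Hval10 Hstuck10].
  { apply cfill_same_outcome; auto.
    intros G t; apply (env_bisim_eval_ctx_sound (envrel_flip X) (is_envrel_flip X HX)
                         (env_bisim_flip X HXb) empty_env); exact Hflip. }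
  split; split; auto.
Qed.
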